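(* Let $X$ be a space containing an open subspace $O$ that is almost zero-dimensional, with $O\neq\varnothing$ and $X\setminus O\neq\varnothing$. Then $X$ is not $\sigma$-connected; that is, either $X$ is not connected, or $X$ is the union of countably infinitely many pairwise disjoint non-empty closed subsets.
   Context: All spaces are separable and metrizable. A subset $A$ of $X$ is a C-set in $X$ if it is an intersection of clopen subsets of $X$. A space is almost zero-dimensional if every point has a neighborhood basis consisting of C-sets in it. A connected space is $\sigma$-connected if it cannot be written as the union of $\omega$-many (countably infinitely many) pairwise disjoint non-empty closed subsets. *)

(* separable metrizable spaces are given as a type with a metric. *)
From Stdlib Require Import Reals.
Open Scope R_scope.

Definition is_metric {X : Type} (d : X -> X -> R) : Prop :=
  (forall x y, 0 <= d x y) /\
  (forall x y, d x y = 0 <-> x = y) /\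
  (forall x y, d x y = d y x) /\
  (forall x y z, d x z <= d x y + d y z).

Definition countable_set {X : Type} (D : X -> Prop) : Prop :=
  exists f : X -> nat, forall x y, D x -> D y -> f x = f y -> x = y.

Definition separable {X : Type} (d : X -> X -> R) : Prop :=
  exists D : X -> Prop, countable_set D /\
    (forall x eps, 0 < eps -> exists y, D y /\ d x y < eps).

Definition is_open {X : Type} (d : X -> X -> R) (U : X -> Prop) : Prop :=
  forall x, U x -> exists eps, 0 < eps /\ forall y, d x y < eps -> U y.

Definition is_closed {X : Type} (d : X -> X -> R) (F : X -> Prop) : Prop :=
  is_open d (fun x => ~ F x).

Definition rel_open {X : Type} (d : X -> X -> R) (O U : X -> Prop) : Prop :=
  (forall x, U x -> O x) /\
  forall x, U x -> exists eps, 0 < eps /\ forall y, O y -> d x y < eps -> U y.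

Definition rel_closed {X : Type} (d : X -> X -> R) (O F : X -> Prop) : Prop :=
  (forall x, F x -> O x) /\ rel_open d O (fun x => O x /\ ~ F x).

Definition rel_clopen {X : Type} (d : X -> X -> R) (O B : X -> Prop) : Prop :=
  rel_open d O B /\ rel_closed d O B.

Definition C_set {X : Type} (d : X -> X -> R) (O A : X -> Prop) : Prop :=
  exists Fam : (X -> Prop) -> Prop,
    (forall B, Fam B -> rel_clopen d O B) /\
    (forall x, A x <-> (O x /\ forall B, Fam B -> B x)).

Definition almost_zero_dim {X : Type} (d : X -> X -> R) (O : X -> Prop) : Prop :=
  forall x, O x ->
    forall U, rel_open d O U -> U x ->
      exists A, C_set d O A /\ (forall y, A y -> U y) /\
        exists V, rel_open d O V /\ V x /\ (forall y, V y -> A y).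

Definition connected {X : Type} (d : X -> X -> R) : Prop :=
  ~ exists U V : X -> Prop,
      is_open d U /\ is_open d V /\ (exists x, U x) /\ (exists x, V x) /\
      (forall x, ~ (U x /\ V x)) /\ (forall x, U x \/ V x).

Definition sigma_connected {X : Type} (d : X -> X -> R) : Prop :=
  connected d /\
  ~ exists F : nat -> X -> Prop,
      (forall n, is_closed d (F n)) /\
      (forall n, exists x, F n x) /\
      (forall n m x, n <> m -> F n x -> F m x -> False) /\
      (forall x, exists n, F n x).

From Stdlib Require Import Reals Lra Lia Classical ClassicalEpsilon Cantor Wf_nat.
Open Scope R_scope.

(* Cover O by countably many C-sets of O that are closed in X (Lindelöf); each
   of them is cut out of O by countably many clopen subsets of O (Lindelöf
   again).  Disjointifying along this double enumeration splits O into
   countably many pairwise disjoint sets closed in X, so together with the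
   closed set X \ O we get a countable closed partition of X with at least two
   non-empty pieces.  If X is connected, no finite union of pieces can be
   clopen, so infinitely many pieces are non-empty; grouping consecutive
   pieces then yields ω non-empty ones. *)

(* Every point of [O] outside [F] has a ball missing [F]; for [F] inside an
   open set [O] this is closedness of [F] relative to [O]. *)
Definition closed_in {X : Type} (d : X -> X -> R) (O F : X -> Prop) : Prop :=
  forall x, O x -> ~ F x -> exists e, 0 < e /\ forall y, d x y < e -> ~ F y.

Definition interior {X : Type} (d : X -> X -> R) (A : X -> Prop) (x : X) : Prop :=
  exists W, is_open d W /\ W x /\ forall y, W y -> A y.

Definition closed_partition_on {X I : Type} (d : X -> X -> R)
    (Y : X -> Prop) (P : I -> X -> Prop) : Prop :=
  (forall i, is_closed d (P i)) /\
  (forall i j x, P i x -> P j x -> i = j) /\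
  (forall x, Y x <-> exists i, P i x).

Lemma least_nat (P : nat -> Prop) :
  (exists n, P n) -> exists n, P n /\ forall k, (k < n)%nat -> ~ P k.
Proof.
  intro HP.
  destruct (dec_inh_nat_subset_has_unique_least_element P (fun n => classic (P n)) HP)
    as [n [[Pn Hmin] _]].
  exists n; split; [exact Pn|]. intros k Hk Pk. specialize (Hmin k Pk). lia.
Qed.

Lemma exists_bound (Rel : nat -> nat -> Prop) (i : nat) :
  (forall j, (j < i)%nat -> exists k, Rel j k) ->
  exists m, forall j, (j < i)%nat -> exists k, (k < m)%nat /\ Rel j k.
Proof.
  induction i as [|i IH]; intro H; [exists 0%nat; intros j Hj; lia|].
  destruct IH as [m Hm]; [intros j Hj; apply H; lia|].
  destruct (H i (Nat.lt_succ_diag_r i)) as [k Hk].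
  exists (S (Nat.max m k)). intros j Hj. destruct (Nat.eq_dec j i) as [->|Hne].
  - exists k; split; [lia | exact Hk].
  - destruct (Hm j ltac:(lia)) as [k' [Hk' Rk']]. exists k'; split; [lia | exact Rk'].
Qed.

Section ClosedIn.
Context {X : Type} (d : X -> X -> R) (O : X -> Prop).

Lemma closed_iff_closed_in_True (F : X -> Prop) : is_closed d F <-> closed_in d (fun _ => True) F.
Proof. split; [intros H x _ | intros H x]; apply H; trivial. Qed.

Lemma closed_in_of_closed (F : X -> Prop) : is_closed d F -> closed_in d O F.
Proof. intros H x _. exact (H x). Qed.

Lemma closed_in_ext (F G : X -> Prop) :
  (forall x, F x <-> G x) -> closed_in d O F -> closed_in d O G.
Proof.
  intros E H x Ox nGx. rewrite <- E in nGx. destruct (H x Ox nGx) as [e [He Hball]].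
  exists e; split; [exact He|]. intros y Hy. rewrite <- E. exact (Hball y Hy).
Qed.

Lemma closed_in_const (P : Prop) : closed_in d O (fun _ => P).
Proof. intros x _ nP. exists 1; split; [lra | intros y _; exact nP]. Qed.

Lemma closed_in_and (F G : X -> Prop) :
  closed_in d O F -> closed_in d O G -> closed_in d O (fun x => F x /\ G x).
Proof.
  intros HF HG x Ox nFG. destruct (classic (F x)) as [Fx|nFx].
  - destruct (HG x Ox (fun Gx => nFG (conj Fx Gx))) as [e [He Hball]].
    exists e; split; [exact He|]. intros y Hy [_ Gy]. exact (Hball y Hy Gy).
  - destruct (HF x Ox nFx) as [e [He Hball]].
    exists e; split; [exact He|]. intros y Hy [Fy _]. exact (Hball y Hy Fy).
Qed.

Lemma closed_in_or (F G : X -> Prop) :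
  closed_in d O F -> closed_in d O G -> closed_in d O (fun x => F x \/ G x).
Proof.
  intros HF HG x Ox nFG.
  destruct (HF x Ox (fun Fx => nFG (or_introl Fx))) as [e1 [He1 Hball1]].
  destruct (HG x Ox (fun Gx => nFG (or_intror Gx))) as [e2 [He2 Hball2]].
  exists (Rmin e1 e2); split; [apply Rmin_pos; assumption|].
  intros y Hy [Fy|Gy].
  - apply (Hball1 y); [apply Rlt_le_trans with (1 := Hy); apply Rmin_l | exact Fy].
  - apply (Hball2 y); [apply Rlt_le_trans with (1 := Hy); apply Rmin_r | exact Gy].
Qed.

Lemma closed_in_forall {I : Type} (F : I -> X -> Prop) :
  (forall i, closed_in d O (F i)) -> closed_in d O (fun x => forall i, F i x).
Proof.
  intros HF x Ox nF. apply not_all_ex_not in nF as [i nFi].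
  destruct (HF i x Ox nFi) as [e [He Hball]].
  exists e; split; [exact He|]. intros y Hy Fy. exact (Hball y Hy (Fy i)).
Qed.

Lemma closed_in_exists_lt (F : nat -> X -> Prop) (n : nat) :
  (forall k, closed_in d O (F k)) ->
  closed_in d O (fun x => exists k, (k < n)%nat /\ F k x).
Proof.
  intro HF. induction n as [|n IH].
  - apply (closed_in_ext (fun _ => False)); [|apply closed_in_const].
    intro x; split; [tauto | intros [k [Hk _]]; lia].
  - apply (closed_in_ext (fun x => (exists k, (k < n)%nat /\ F k x) \/ F n x));
      [|apply closed_in_or; [exact IH | apply HF]].
    intro x; split.
    + intros [[k [Hk Fk]]|Fn]; [exists k; split; [lia | exact Fk] | exists n; auto].
    + intros [k [Hk Fk]]. destruct (Nat.eq_dec k n) as [->|Hne]; [right; exact Fk|].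
      left; exists k; split; [lia | exact Fk].
Qed.

Lemma closed_in_compl_open (U : X -> Prop) : is_open d U -> closed_in d O (fun x => ~ U x).
Proof.
  intros HU x _ nnUx. apply NNPP in nnUx. destruct (HU x nnUx) as [e [He Hball]].
  exists e; split; [exact He|]. intros y Hy nUy. exact (nUy (Hball y Hy)).
Qed.

Lemma closed_inter_closed_in (A F : X -> Prop) :
  is_closed d A -> (forall x, A x -> O x) -> closed_in d O F ->
  is_closed d (fun x => A x /\ F x).
Proof.
  intros HA HAO HF x nAF. destruct (classic (A x)) as [Ax|nAx].
  - destruct (HF x (HAO x Ax) (fun Fx => nAF (conj Ax Fx))) as [e [He Hball]].
    exists e; split; [exact He|]. intros y Hy [_ Fy]. exact (Hball y Hy Fy).
  - destruct (HA x nAx) as [e [He Hball]].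
    exists e; split; [exact He|]. intros y Hy [Ay _]. exact (Hball y Hy Ay).
Qed.

End ClosedIn.

Lemma interior_open {X : Type} (d : X -> X -> R) (A : X -> Prop) : is_open d (interior d A).
Proof.
  intros x [W [HW [Wx HWA]]]. destruct (HW x Wx) as [e [He Hball]].
  exists e; split; [exact He|]. intros y Hy. exists W; auto.
Qed.

Lemma lindelof {X I : Type} (d : X -> X -> R) (U : I -> X -> Prop) :
  is_metric d -> separable d -> inhabited I -> (forall i, is_open d (U i)) ->
  exists s : nat -> I, forall x i, U i x -> exists n, U (s n) x.
Proof.
  intros [_ [_ [Hsym Htri]]] [D [[f Hf] Hdense]] HI HU.
  (* index [n] codes a point [q] of [D] (through [f q]) and a radius [1/N] *)
  set (fits := fun n i => exists q, D q /\ f q = fst (of_nat n) /\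
                 forall y, d q y < / INR (snd (of_nat n)) -> U i y).
  exists (fun n => epsilon HI (fits n)). intros x i Ux.
  destruct (HU i x Ux) as [e [He Hball]].
  destruct (archimed_cor1 (e / 2)) as [N [HN HN0]]; [lra|].
  assert (Hr : 0 < / INR N) by (apply Rinv_0_lt_compat, lt_0_INR; exact HN0).
  destruct (Hdense x (/ INR N) Hr) as [q [Dq Hxq]].
  exists (to_nat (f q, N)).
  assert (Hfits : exists i, fits (to_nat (f q, N)) i).
  { exists i, q. rewrite cancel_of_to; simpl. split; [exact Dq|]. split; [reflexivity|].
    intros y Hy. apply Hball. pose proof (Htri x q y). lra. }
  destruct (epsilon_spec HI _ Hfits) as [q' [Dq' [Hq' Hball']]].
  rewrite cancel_of_to in Hq', Hball'; simpl in Hq', Hball'.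
  rewrite (Hf q' q Dq' Dq Hq') in Hball'.
  apply Hball'. rewrite Hsym. exact Hxq.
Qed.

Section CSets.
Context {X : Type} (d : X -> X -> R) (O : X -> Prop).

Lemma open_of_rel_open (U : X -> Prop) : is_open d O -> rel_open d O U -> is_open d U.
Proof.
  intros HO [HUO HU] x Ux. destruct (HU x Ux) as [e1 [He1 Hball1]].
  destruct (HO x (HUO x Ux)) as [e2 [He2 Hball2]].
  exists (Rmin e1 e2); split; [apply Rmin_pos; assumption|]. intros y Hy.
  apply Hball1; [apply Hball2|]; apply Rlt_le_trans with (1 := Hy);
    [apply Rmin_r | apply Rmin_l].
Qed.

Lemma closed_in_of_rel_closed (F : X -> Prop) : rel_closed d O F -> closed_in d O F.
Proof.
  intros [HFO [_ Hcompl]] x Ox nFx.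
  destruct (Hcompl x (conj Ox nFx)) as [e [He Hball]].
  exists e; split; [exact He|]. intros y Hy Fy. exact (proj2 (Hball y (HFO y Fy) Hy) Fy).
Qed.

Lemma closed_in_diff_rel_open (B : X -> Prop) :
  rel_open d O B -> closed_in d O (fun x => O x /\ ~ B x).
Proof.
  intros [_ HB] x Ox nx. assert (Bx : B x) by (apply NNPP; tauto).
  destruct (HB x Bx) as [e [He Hball]].
  exists e; split; [exact He|]. intros y Hy [Oy nBy]. exact (nBy (Hball y Oy Hy)).
Qed.

Lemma C_set_closed_in (A : X -> Prop) : C_set d O A -> closed_in d O A.
Proof.
  intros [Fam [HFam HA]].
  apply (closed_in_ext d O (fun x => O x /\ forall B, Fam B -> B x));
    [intro x; symmetry; apply HA|].
  apply closed_in_and; [intros x Ox nOx; contradiction|].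
  apply closed_in_forall; intro B. apply (closed_in_forall d O (fun (_ : Fam B) => B)).
  intro FB. apply closed_in_of_rel_closed, (HFam B FB).
Qed.

Lemma closed_of_closed_in (A : X -> Prop) (e : R) : is_metric d -> 0 < e ->
  (forall x y, A x -> d x y < e -> O y) -> closed_in d O A -> is_closed d A.
Proof.
  intros [_ [_ [Hsym _]]] He Hnear HA x nAx.
  destruct (classic (O x)) as [Ox|nOx]; [exact (HA x Ox nAx)|].
  exists e; split; [exact He|]. intros y Hy Ay.
  apply nOx, (Hnear y x Ay). rewrite Hsym. exact Hy.
Qed.

Lemma closed_C_set_nbhd (z : X) : is_metric d -> is_open d O -> almost_zero_dim d O -> O z ->
  exists A, C_set d O A /\ is_closed d A /\ interior d A z.
Proof.
  intros Hmet HO Hazd Oz. pose proof Hmet as [_ [Hzero [_ Htri]]].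
  destruct (HO z Oz) as [r [Hr Hball]].
  set (U := fun y => O y /\ d z y < r / 2).
  assert (HU : rel_open d O U).
  { split; [intros y [Oy _]; exact Oy|]. intros x [Ox Hx].
    exists (r / 2 - d z x); split; [lra|]. intros y Oy Hy.
    split; [exact Oy|]. pose proof (Htri z x y). lra. }
  assert (Uz : U z) by (split; [exact Oz | rewrite (proj2 (Hzero z z) eq_refl); lra]).
  destruct (Hazd z Oz U HU Uz) as [A [HA [HAU [W [HW [Wz HWA]]]]]].
  exists A. split; [exact HA|]. split.
  - apply (closed_of_closed_in A (r / 2) Hmet); [lra| |exact (C_set_closed_in A HA)].
    intros x y Ax Hxy. apply Hball. destruct (HAU x Ax) as [_ Hzx].
    pose proof (Htri z x y). lra.
  - exists W. split; [exact (open_of_rel_open W HO HW)|]. split; assumption.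
Qed.

Lemma C_set_countable_complement (A : X -> Prop) :
  is_metric d -> separable d -> is_open d O -> C_set d O A ->
  exists S : nat -> X -> Prop, (forall k, is_open d (S k)) /\
    (forall k, closed_in d O (S k)) /\ (forall z, A z <-> O z /\ forall k, ~ S k z).
Proof.
  intros Hmet Hsep HO [Fam [HFam HA]].
  set (U := fun (B : option {B | Fam B}) x =>
              match B with None => False | Some B => O x /\ ~ proj1_sig B x end).
  assert (HU : forall B, is_open d (U B)).
  { intros [[B FB]|]; simpl; [|intros x []].
    apply open_of_rel_open; [exact HO | apply (HFam B FB)]. }
  assert (HUc : forall B, closed_in d O (U B)).
  { intros [[B FB]|]; simpl; [|apply closed_in_const].
    apply closed_in_diff_rel_open, (HFam B FB). }
  destruct (lindelof d U Hmet Hsep (inhabits None) HU) as [s Hs].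
  exists (fun k => U (s k)). split; [intro k; apply HU|]. split; [intro k; apply HUc|].
  intro z. rewrite HA. split.
  - intros [Oz HB]. split; [exact Oz|]. intro k.
    destruct (s k) as [[B FB]|]; simpl; [|tauto]. intros [_ nB]. exact (nB (HB B FB)).
  - intros [Oz Hk]. split; [exact Oz|]. intros B FB. apply NNPP; intro nB.
    destruct (Hs z (Some (exist _ B FB)) (conj Oz nB)) as [k Hk']. exact (Hk k Hk').
Qed.

End CSets.

Section Disjointification.
Context {X : Type} (d : X -> X -> R) (O : X -> Prop)
  (A : nat -> X -> Prop) (S : nat -> nat -> X -> Prop).
Hypothesis A_closed : forall i, is_closed d (A i).
Hypothesis S_open : forall j k, is_open d (S j k).
Hypothesis S_closed_in : forall j k, closed_in d O (S j k).
Hypothesis A_spec : forall i z, A i z <-> O z /\ forall k, ~ S i k z.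
Hypothesis A_cover : forall z, O z -> exists i, A i z.

(* [z] lies outside [A j] for every [j < i], witnessed by some [S j k] with [k < m]. *)
Let escaped i m z := forall j, (j < i)%nat -> exists k, (k < m)%nat /\ S j k z.

(* [i] is the least index with [A i z], and [m] the least stage at which [z]
   is seen to have left every earlier [A j]. *)
Let piece i m z := A i z /\ escaped i m z /\ forall m', (m' < m)%nat -> ~ escaped i m' z.

Lemma not_escaped i m z :
  ~ escaped i m z <-> exists j, (j < i)%nat /\ forall k, (k < m)%nat -> ~ S j k z.
Proof.
  split.
  - intro H. apply NNPP; intro H'. apply H; intros j Hj. apply NNPP; intro Hk.
    apply H'. exists j; split; [exact Hj|]. intros k Hk' Sk. apply Hk; eauto.
  - intros [j [Hj Hk]] H. destruct (H j Hj) as [k [Hk' Sk]]. exact (Hk k Hk' Sk).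
Qed.

Lemma piece_closed i m : is_closed d (piece i m).
Proof.
  apply closed_inter_closed_in with (O := O); [apply A_closed | intros z Az; apply (A_spec i z), Az|].
  apply closed_in_and.
  - apply closed_in_forall; intro j. apply closed_in_forall; intro Hj.
    apply closed_in_exists_lt; intro k. apply S_closed_in.
  - apply closed_in_forall; intro m'. apply closed_in_forall; intro Hm'.
    apply (closed_in_ext d O (fun z => exists j, (j < i)%nat /\ forall k, (k < m')%nat -> ~ S j k z));
      [intro z; symmetry; apply not_escaped|].
    apply closed_in_exists_lt; intro j. apply closed_in_forall; intro k.
    apply closed_in_forall; intro Hk. apply closed_in_compl_open, S_open.
Qed.

Lemma piece_unique i m i' m' z : piece i m z -> piece i' m' z -> i = i' /\ m = m'.
Proof.
  assert (Hi : forall i m i' m', piece i m z -> piece i' m' z -> ~ (i < i')%nat).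
  { intros i1 m1 i2 m2 [A1 _] [_ [E2 _]] Hlt. destruct (E2 i1 Hlt) as [k [_ Sk]].
    exact (proj2 (proj1 (A_spec i1 z) A1) k Sk). }
  assert (Hm : forall i m m', piece i m z -> piece i m' z -> ~ (m < m')%nat).
  { intros i0 m1 m2 [_ [E1 _]] [_ [_ Min2]] Hlt. exact (Min2 m1 Hlt E1). }
  intros P1 P2. assert (i = i') as <-.
  { enough (~ (i < i')%nat /\ ~ (i' < i)%nat) by lia. split; eapply Hi; eassumption. }
  split; [reflexivity|].
  enough (~ (m < m')%nat /\ ~ (m' < m)%nat) by lia. split; eapply Hm; eassumption.
Qed.

Lemma piece_cover z : O z <-> exists i m, piece i m z.
Proof.
  split; [|intros [i [m [Az _]]]; apply (A_spec i z), Az].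
  intro Oz. destruct (least_nat (fun i => A i z) (A_cover z Oz)) as [i [Az Hfirst]].
  assert (Hescape : exists m, escaped i m z).
  { apply (exists_bound (fun j k => S j k z)). intros j Hj.
    apply NNPP; intro Hnone. apply (Hfirst j Hj), A_spec. split; [exact Oz|].
    intros k Sk. apply Hnone; eauto. }
  destruct (least_nat (fun m => escaped i m z) Hescape) as [m [Em Hmin]].
  exists i, m. split; [exact Az|]. split; [exact Em | exact Hmin].
Qed.

Lemma closed_partition_of_countable_cover :
  exists P : nat * nat -> X -> Prop, closed_partition_on d O P.
Proof.
  exists (fun p => piece (fst p) (snd p)). split; [|split].
  - intros [i m]; apply piece_closed.
  - intros [i m] [i' m'] z P1 P2. destruct (piece_unique i m i' m' z P1 P2) as [-> ->].
    reflexivity.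
  - intro z. rewrite piece_cover. split.
    + intros [i [m Pz]]. exists (i, m); exact Pz.
    + intros [[i m] Pz]. exists i, m; exact Pz.
Qed.

End Disjointification.

Lemma closed_partition_on_reindex {X I J : Type} (d : X -> X -> R) (Y : X -> Prop)
    (P : I -> X -> Prop) (g : J -> I) (h : I -> J) :
  (forall j, h (g j) = j) -> (forall i, g (h i) = i) ->
  closed_partition_on d Y P -> closed_partition_on d Y (fun j => P (g j)).
Proof.
  intros hg gh [Hcl [Hdis Hcov]]. split; [|split].
  - intro j; apply Hcl.
  - intros j j' x Hj Hj'. rewrite <- (hg j), <- (hg j'). f_equal. exact (Hdis _ _ x Hj Hj').
  - intro x. rewrite Hcov. split.
    + intros [i Hi]. exists (h i). rewrite gh. exact Hi.
    + intros [j Hj]. exists (g j). exact Hj.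
Qed.

Lemma closed_partition_of_almost_zero_dim {X : Type} (d : X -> X -> R) (O : X -> Prop) :
  is_metric d -> separable d -> is_open d O -> almost_zero_dim d O ->
  exists P : nat -> X -> Prop, closed_partition_on d O P.
Proof.
  intros Hmet Hsep HO Hazd.
  destruct (classic (exists z, O z)) as [[z0 Oz0]|Hempty].
  2: { exists (fun _ _ => False). split; [intro; apply closed_iff_closed_in_True, closed_in_const|].
       split; [intros i j x []|]. intro x; split; [intro Ox; exfalso; eauto | intros [_ []]]. }
  destruct (choice (fun (z : {z | O z}) A =>
              C_set d O A /\ is_closed d A /\ interior d A (proj1_sig z))) as [A HA].
  { intros [z Oz]. exact (closed_C_set_nbhd d O z Hmet HO Hazd Oz). }
  destruct (lindelof d (fun z => interior d (A z)) Hmet Hsep (inhabits (exist _ z0 Oz0))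
              (fun z => interior_open d (A z))) as [s Hs].
  destruct (choice (fun i (S : nat -> X -> Prop) => (forall k, is_open d (S k)) /\ (forall k, closed_in d O (S k)) /\
              forall z, A (s i) z <-> O z /\ forall k, ~ S k z)) as [S HS].
  { intro i. apply C_set_countable_complement; try assumption. apply (HA (s i)). }
  destruct (closed_partition_of_countable_cover d O (fun i => A (s i)) S) as [P HP].
  - intro i; apply (HA (s i)).
  - intro j; apply (HS j).
  - intro j; apply (HS j).
  - intro i; apply (HS i).
  - intros z Oz. destruct (Hs z (exist _ z Oz) (proj2 (proj2 (HA (exist _ z Oz)))))
      as [n [W [_ [Wz HWA]]]].
    exists n. exact (HWA z Wz).
  - exists (fun n => P (of_nat n)).
    exact (closed_partition_on_reindex d O P of_nat to_nat cancel_to_of cancel_of_to HP).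
Qed.

Lemma closed_partition_add_complement {X : Type} (d : X -> X -> R) (O : X -> Prop)
    (P : nat -> X -> Prop) :
  is_open d O -> closed_partition_on d O P ->
  closed_partition_on d (fun _ => True)
    (fun n => match n with 0%nat => fun x => ~ O x | S n => P n end).
Proof.
  intros HO [Hcl [Hdis Hcov]]. split; [|split].
  - intros [|n]; [|apply Hcl]. apply closed_iff_closed_in_True, closed_in_compl_open, HO.
  - intros [|n] [|m] x Hn Hm; try reflexivity.
    + exfalso. exact (Hn (proj2 (Hcov x) (ex_intro _ m Hm))).
    + exfalso. exact (Hm (proj2 (Hcov x) (ex_intro _ n Hn))).
    + f_equal. exact (Hdis n m x Hn Hm).
  - intro x. split; [intros _ | intros _; trivial].
    destruct (classic (O x)) as [Ox|nOx]; [|exists 0%nat; exact nOx].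
    destruct (proj1 (Hcov x) Ox) as [n Pn]. exists (S n); exact Pn.
Qed.

Lemma connected_partition_unbounded {X : Type} (d : X -> X -> R) (P : nat -> X -> Prop)
    (n0 n1 : nat) (x0 x1 : X) :
  connected d -> closed_partition_on d (fun _ => True) P ->
  n0 <> n1 -> P n0 x0 -> P n1 x1 ->
  forall N, exists n, (N <= n)%nat /\ exists x, P n x.
Proof.
  intros Hconn [Hcl [Hdis Hcov]] Hne P0 P1 N. apply NNPP; intro Hempty.
  set (rest := fun x => exists n, (n < N)%nat /\ (n <> n0 /\ P n x)).
  assert (Hrest : is_closed d rest).
  { apply closed_iff_closed_in_True, closed_in_exists_lt. intro n.
    apply closed_in_and; [apply closed_in_const | apply closed_in_of_closed, Hcl]. }
  apply Hconn. exists (fun x => ~ rest x), (fun x => ~ P n0 x).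
  split; [exact Hrest|]. split; [exact (Hcl n0)|].
  split; [|split; [|split]].
  - exists x0. intros [n [_ [Hn Pn]]]. exact (Hn (Hdis _ _ _ Pn P0)).
  - exists x1. intro P0'. exact (Hne (Hdis _ _ _ P0' P1)).
  - intros x [nrest nP0]. destruct (proj1 (Hcov x) I) as [n Pn].
    destruct (Nat.eq_dec n n0) as [->|Hn]; [exact (nP0 Pn)|].
    destruct (Nat.lt_ge_cases n N) as [Hlt|Hge].
    + apply nrest. exists n. auto.
    + apply Hempty. eauto.
  - intro x. destruct (classic (P n0 x)) as [Px|nPx]; [left|right; exact nPx].
    intros [n [_ [Hn Pn]]]. exact (Hn (Hdis _ _ _ Pn Px)).
Qed.

Lemma closed_partition_regroup {X : Type} (d : X -> X -> R) (P : nat -> X -> Prop) :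
  closed_partition_on d (fun _ => True) P ->
  (forall N, exists n, (N <= n)%nat /\ exists x, P n x) ->
  exists F : nat -> X -> Prop,
    closed_partition_on d (fun _ => True) F /\ forall k, exists x, F k x.
Proof.
  intros [Hcl [Hdis Hcov]] Hinf.
  destruct (choice _ Hinf) as [g Hg].
  (* [t] enumerates increasing indices of non-empty pieces; the [k]-th new
     piece groups the old pieces with indices in (t (k - 1), t k] (in [0, t 0]
     for [k = 0]). *)
  set (t := fix t k := match k with 0%nat => g 0%nat | S k => g (S (t k)) end).
  assert (t_nonempty : forall k, exists x, P (t k) x) by (intros [|k]; apply Hg).
  assert (t_step : forall k, (t k < t (S k))%nat)
    by (intro k; destruct (Hg (S (t k))) as [Hle _]; simpl; lia).
  assert (t_mono : forall j k, (j < k)%nat -> (t j < t k)%nat).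
  { intros j k Hjk. induction Hjk as [|k _ IH]; [apply t_step|].
    specialize (t_step k). lia. }
  assert (t_block : forall k n, (n <= t k)%nat ->
            exists k', (n <= t k')%nat /\ forall j, (j < k')%nat -> (t j < n)%nat).
  { induction k as [|k IH]; intros n Hn.
    - exists 0%nat. split; [exact Hn | intros j Hj; lia].
    - destruct (Nat.le_gt_cases n (t k)) as [Hle|Hgt]; [exact (IH n Hle)|].
      exists (S k). split; [exact Hn|]. intros j Hj.
      destruct (Nat.eq_dec j k) as [->|Hne]; [exact Hgt|]. specialize (t_mono j k). lia. }
  assert (t_ge : forall k, (k <= t k)%nat).
  { induction k as [|k IH]; [lia|]. specialize (t_step k). lia. }
  exists (fun k x => exists n, (n < S (t k))%nat /\
                       ((forall j, (j < k)%nat -> (t j < n)%nat) /\ P n x)).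
  split; [split; [|split]|].
  - intro k. apply closed_iff_closed_in_True, closed_in_exists_lt. intro n.
    apply closed_in_and; [apply closed_in_const | apply closed_in_of_closed, Hcl].
  - intros k k' x [n [Hn [Hkn Pn]]] [n' [Hn' [Hkn' Pn']]].
    rewrite <- (Hdis n n' x Pn Pn') in Hn', Hkn'.
    enough (~ (k < k')%nat /\ ~ (k' < k)%nat) by lia.
    split; intro Hlt; [specialize (Hkn' k Hlt) | specialize (Hkn k' Hlt)]; lia.
  - intro x. split; [intros _ | intros _; trivial].
    destruct (proj1 (Hcov x) I) as [n Pn].
    destruct (t_block n n (t_ge n)) as [k [Hnk Hbefore]].
    exists k, n. split; [lia|]. split; [exact Hbefore | exact Pn].
  - intro k. destruct (t_nonempty k) as [x Px]. exists x, (t k).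
    split; [lia|]. split; [exact (fun j => t_mono j k) | exact Px].
Qed.

Theorem theorem4p11 (X : Type) (d : X -> X -> R)
  (Hmet : is_metric d) (Hsep : separable d)
  (O : X -> Prop) (HOopen : is_open d O) (HOazd : almost_zero_dim d O)
  (HOne : exists x, O x) (HcOne : exists x, ~ O x) :
  ~ sigma_connected d.
Proof.
  intros [Hconn Hnot_sigma]. apply Hnot_sigma.
  destruct (closed_partition_of_almost_zero_dim d O Hmet Hsep HOopen HOazd) as [P HP].
  pose proof (closed_partition_add_complement d O P HOopen HP) as HQ.
  destruct HOne as [z Oz]. destruct (proj1 (proj2 (proj2 HP) z) Oz) as [n Pz].
  destruct HcOne as [y nOy].
  destruct (closed_partition_regroup d _ HQ
              (connected_partition_unbounded d _ 0 (S n) y z Hconn HQ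
                 (Nat.neq_0_succ n) nOy Pz))
    as [F [[Fcl [Fdis Fcov]] Fne]].
  exists F. split; [exact Fcl|]. split; [exact Fne|]. split.
  - intros k k' x Hne Fk Fk'. exact (Hne (Fdis k k' x Fk Fk')).
  - intro x. exact (proj1 (Fcov x) I).
Qed.
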